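(* $\mathcal{OBLOT}^{F}_{\mathcal{L.V.}} \perp \mathcal{OBLOT}^{S}_{\mathcal{F.V.}}$, i.e. the model $\mathcal{OBLOT}$ under the fully synchronous scheduler with limited visibility is computationally incomparable with the model $\mathcal{OBLOT}$ under the semi-synchronous scheduler with full visibility.
   Context: Robots are anonymous, identical, autonomous computational entities viewed as points moving in the Euclidean plane. Each has its own local coordinate system, with no agreement between robots and no common chirality, and perceives itself at its origin. Robots operate in Look-Compute-Move cycles. In Look a robot takes an instantaneous snapshot of the positions of the robots it can see. In Compute it runs the common algorithm on the snapshot to obtain a destination. In Move it moves there. Model $\mathcal{OBLOT}$: robots are oblivious (no memory of previous cycles) and silent (no means of communication). Schedulers: time is divided into rounds. Under the semi-synchronous scheduler $S$ (SSYNCH), in each round an adversarially chosen set of robots is activated and they perform one full cycle in perfect synchronization; every robot is activated infinitely often. Under the fully synchronous scheduler $F$ (FSYNCH), every robot is activated in every round. Visibility: - Full visibility $\mathcal{F.V.}$: each robot sees all robots. - Limited visibility $\mathcal{L.V.}$: a robot sees only robots within a fixed distance $V_r$ (same for all robots) of its current position, and the initial visibility graph (robots adjacent iff they see each other) is connected. Relations: $\mathcal{M}^X_V$ denotes model $\mathcal{M}$ under scheduler $X$ with visibility $V$. $Task(\mathcal{M},X,V;R)$ is the set of problems solvable by team $R$ in that setting, and $\mathcal{R}$ is the set of all teams. $\mathcal{M}^{X_1}_{V_1} \perp \mathcal{N}^{X_2}_{V_2}$ means there exist $R_1,R_2\in\mathcal{R}$ with $Task(\mathcal{M},X_1,V_1;R_1)\setminus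 Task(\mathcal{N},X_2,V_2;R_1)\neq\emptyset$ and $Task(\mathcal{N},X_2,V_2;R_2)\setminus Task(\mathcal{M},X_1,V_1;R_2)\neq\emptyset$. *)

From Stdlib Require Import Reals Lra.
Open Scope R_scope.

Definition point := (R * R)%type.

Definition padd (p q : point) : point := (fst p + fst q, snd p + snd q).
Definition psub (p q : point) : point := (fst p - fst q, snd p - snd q).
Definition dist (p q : point) : R :=
  sqrt ((fst p - fst q) ^ 2 + (snd p - snd q) ^ 2).

(** * Local coordinate systems
    A local frame is a similarity of the plane centred at the robot:
    rotation by an arbitrary angle, arbitrary positive unit length, and an
    arbitrary handedness (no common chirality).  The matrix is
    [[a,-b],[b,a]] (direct) or [[a,b],[b,-a]] (reflected), (a,b) <> (0,0). *)
Record frame := mkFrame {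
  fa : R; fb : R; frefl : bool;
  fnz : fa <> 0 \/ fb <> 0 }.

Definition flin (f : frame) (p : point) : point :=
  let a := fa f in let b := fb f in let x := fst p in let y := snd p in
  if frefl f then (a * x + b * y, b * x - a * y)
  else (a * x - b * y, b * x + a * y).

Definition flin_inv (f : frame) (p : point) : point :=
  let a := fa f in let b := fb f in let u := fst p in let v := snd p in
  let s := a ^ 2 + b ^ 2 in
  if frefl f then ((a * u + b * v) / s, (b * u - a * v) / s)
  else ((a * u + b * v) / s, (a * v - b * u) / s).

Definition to_local (f : frame) (x p : point) : point := flin f (psub p x).
Definition to_global (f : frame) (x d : point) : point := padd x (flin_inv f d).

Record team := mkTeam {
  tn : nat; tV : R;
  tn_pos : (0 < tn)%nat; tV_pos : 0 < tV }.

(** Robot [i] (with [i < tn]) is at [c i]. *)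
Definition config := nat -> point.
Definition execution := nat -> config.

Inductive visibility := FV | LV.
Inductive scheduler := FSYNCH | SSYNCH.

Definition sees (v : visibility) (V : R) (c : config) (i j : nat) : Prop :=
  match v with FV => True | LV => dist (c i) (c j) <= V end.

Definition snapshot (v : visibility) (Rt : team) (c : config) (f : frame) (i : nat)
  : point -> Prop :=
  fun q => exists j, (j < tn Rt)%nat /\ sees v (tV Rt) c i j /\
                     q = to_local f (c i) (c j).

(** An OBLOT algorithm: oblivious, silent; destination (local coordinates)
    computed from the current snapshot only. *)
Definition algorithm := (point -> Prop) -> point.

Definition valid_schedule (s : scheduler) (n : nat) (act : nat -> nat -> bool) : Prop :=
  match s with
  | FSYNCH => forall t i, (i < n)%nat -> act t i = true
  | SSYNCH =>
      (forall t, exists i, (i < n)%nat /\ act t i = true) /\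
      (forall i, (i < n)%nat -> forall t, exists t', (t <= t')%nat /\ act t' i = true)
  end.

(** Frames are fixed per robot (chosen adversarially) for the execution. *)
Fixpoint exec (v : visibility) (Rt : team) (A : algorithm) (frames : nat -> frame)
  (act : nat -> nat -> bool) (c0 : config) (t : nat) : config :=
  match t with
  | O => c0
  | S t' =>
      let c := exec v Rt A frames act c0 t' in
      fun i => if act t' i
               then to_global (frames i) (c i) (A (snapshot v Rt c (frames i) i))
               else c i
  end.

Inductive vreach (n : nat) (V : R) (c : config) (i : nat) : nat -> Prop :=
  | vreach_refl : vreach n V c i i
  | vreach_step : forall j k, vreach n V c i j -> (k < n)%nat ->
                  dist (c j) (c k) <= V -> vreach n V c i k.

Definition vis_connected (n : nat) (V : R) (c : config) : Prop :=
  forall i j, (i < n)%nat -> (j < n)%nat -> vreach n V c i j.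

Definition admissible (Rt : team) (c : config) : Prop :=
  (forall i j, (i < tn Rt)%nat -> (j < tn Rt)%nat -> c i = c j -> i = j) /\
  vis_connected (tn Rt) (tV Rt) c.

(** * Problems
    A problem is a temporal geometric predicate on the sequence of
    configurations, insensitive to the time scale (stuttering). *)
Definition stretching (g : nat -> nat) : Prop :=
  g O = O /\ (forall t, g (S t) = g t \/ g (S t) = S (g t)) /\
  (forall m, exists t, g t = m).

Record problem := mkProblem {
  holds : execution -> Prop;
  holds_stutter : forall e g, stretching g -> (holds e <-> holds (fun t => e (g t))) }.

Definition solvable (s : scheduler) (v : visibility) (Rt : team) (P : problem) : Prop :=
  exists A : algorithm,
    forall (c0 : config), admissible Rt c0 ->
    forall (frames : nat -> frame) (act : nat -> nat -> bool),
      valid_schedule s (tn Rt) act ->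
      holds P (exec v Rt A frames act c0).

Definition incomparable (s1 : scheduler) (v1 : visibility)
                        (s2 : scheduler) (v2 : visibility) : Prop :=
  (exists (R1 : team) (P : problem), solvable s1 v1 R1 P /\ ~ solvable s2 v2 R1 P) /\
  (exists (R2 : team) (P : problem), solvable s2 v2 R2 P /\ ~ solvable s1 v1 R2 P).

(* Lockstep motion of two robots (robot 0 eventually moves, and in every round
   either both robots move or both stay) is solved under FSYNCH by letting every
   robot always step forward, whatever the visibility.  Under SSYNCH the
   adversary alternates the two robots, so they never move together, and then
   nobody may ever move.

   Conversely, four robots placed at 0, 1, 2, 3 on a line (cfgA) must eventually
   move, while at 0, 1, 2, 5/2 (cfgB) they must never move.  With full
   visibility a robot tells them apart: only cfgB has two distances in ratio 5,
   and local frames are similarities, which preserve ratios.  With visibility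
   radius 1, every robot of cfgA, in a suitable frame, has exactly the view of
   some robot of cfgB.  Under FSYNCH all robots of cfgB keep still, so the
   algorithm returns the null move on those views, and cfgA stays frozen too. *)

From Stdlib Require Import Reals Lra Lia.
From Stdlib Require Import ClassicalEpsilon FunctionalExtensionality PropExtensionality.
Open Scope R_scope.

Definition sqdist (p q : point) : R := (fst p - fst q) ^ 2 + (snd p - snd q) ^ 2.

Lemma sqdist_ge0 p q : 0 <= sqdist p q.
Proof. unfold sqdist; apply Rplus_le_le_0_compat; apply pow2_ge_0. Qed.

Lemma dist_le_iff p q r : 0 <= r -> dist p q <= r <-> sqdist p q <= r ^ 2.
Proof.
  intros Hr. change (sqrt (sqdist p q) <= r <-> sqdist p q <= r ^ 2).
  rewrite <- (sqrt_pow2 r Hr) at 1. split.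
  - apply sqrt_le_0; [apply sqdist_ge0 | apply pow2_ge_0].
  - apply sqrt_le_1_alt.
Qed.

Lemma dist_comm p q : dist p q = dist q p.
Proof. unfold dist; f_equal; ring. Qed.

Lemma frame_scale_pos f : 0 < fa f ^ 2 + fb f ^ 2.
Proof. destruct f as [a b r Hnz]; simpl; destruct Hnz; nra. Qed.

Lemma sqdist_to_local f x p q :
  sqdist (to_local f x p) (to_local f x q) = (fa f ^ 2 + fb f ^ 2) * sqdist p q.
Proof. destruct f as [a b [] Hnz]; unfold sqdist, to_local, flin, psub; simpl; ring. Qed.

Lemma to_global_origin f x : to_global f x (0, 0) = x.
Proof.
  destruct x as [x1 x2], f as [a b [] Hnz];
    unfold to_global, padd, flin_inv; simpl; f_equal; unfold Rdiv; ring.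
Qed.

Lemma sqnorm_flin_inv f d :
  sqdist (flin_inv f d) (0, 0) = sqdist d (0, 0) / (fa f ^ 2 + fb f ^ 2).
Proof.
  pose proof (frame_scale_pos f) as Hs.
  destruct f as [a b [] Hnz]; cbn [fa fb] in Hs; unfold sqdist, flin_inv; cbn [fa fb frefl fst snd];
    field; lra.
Qed.

Lemma to_global_eq_self f x d : to_global f x d = x <-> d = (0, 0).
Proof.
  split; [|intros ->; apply to_global_origin].
  intros E. assert (E0 : flin_inv f d = (0, 0)).
  { destruct x as [x1 x2]; unfold to_global, padd in E; injection E as E1 E2.
    apply injective_projections; simpl; lra. }
  pose proof (sqnorm_flin_inv f d) as H. rewrite E0 in H.
  pose proof (frame_scale_pos f) as Hs.
  destruct d as [u v]; unfold sqdist in H; cbn [fst snd] in H.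
  assert (Huv : u ^ 2 + v ^ 2 = 0).
  { apply (Rmult_eq_reg_r (/ (fa f ^ 2 + fb f ^ 2))); [|apply Rinv_neq_0_compat; lra].
    transitivity (((u - 0) ^ 2 + (v - 0) ^ 2) / (fa f ^ 2 + fb f ^ 2)); [field; lra|].
    rewrite <- H. ring. }
  f_equal; nra.
Qed.

Lemma exec_succ v Rt A frames act c0 t i :
  exec v Rt A frames act c0 (S t) i =
  if act t i then to_global (frames i) (exec v Rt A frames act c0 t i)
                    (A (snapshot v Rt (exec v Rt A frames act c0 t) (frames i) i))
  else exec v Rt A frames act c0 t i.
Proof. reflexivity. Qed.

Lemma exec_inactive v Rt A frames act c0 t i :
  act t i = false -> exec v Rt A frames act c0 (S t) i = exec v Rt A frames act c0 t i.
Proof. intros Hidle. rewrite exec_succ, Hidle. reflexivity. Qed.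

Lemma snapshot_ext v Rt c c' f i :
  (forall j, (j < tn Rt)%nat -> c j = c' j) -> (i < tn Rt)%nat ->
  snapshot v Rt c f i = snapshot v Rt c' f i.
Proof.
  intros Hcc' Hi. apply functional_extensionality; intros q.
  apply propositional_extensionality. unfold snapshot.
  split; intros [j [Hj [Hs Hq]]]; exists j; unfold sees in *.
  - rewrite <- (Hcc' i Hi), <- (Hcc' j Hj). auto.
  - rewrite (Hcc' i Hi), (Hcc' j Hj) in *. auto.
Qed.

Lemma exec_stationary v Rt A frames act c0 :
  (forall i, (i < tn Rt)%nat -> A (snapshot v Rt c0 (frames i) i) = (0, 0)) ->
  forall t i, (i < tn Rt)%nat -> exec v Rt A frames act c0 t i = c0 i.
Proof.
  intros Hstay t. induction t as [|t IH]; intros i Hi; [reflexivity|].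
  rewrite exec_succ, (IH i Hi). destruct (act t i); [|reflexivity].
  rewrite (snapshot_ext v Rt _ c0 _ _ IH Hi), (Hstay i Hi).
  apply to_global_origin.
Qed.

Lemma valid_schedule_active s n act :
  (0 < n)%nat -> valid_schedule s n act -> forall t, exists i, (i < n)%nat /\ act t i = true.
Proof.
  intros Hn Hact t. destruct s; simpl in Hact.
  - exists O; auto.
  - apply Hact.
Qed.

Lemma vreach_trans n V c i j k : vreach n V c i j -> vreach n V c j k -> vreach n V c i k.
Proof. intros Hij Hjk. induction Hjk; [exact Hij | eapply vreach_step; eauto]. Qed.

Lemma path_vis_connected n V c :
  (forall i, (S i < n)%nat -> dist (c i) (c (S i)) <= V) -> vis_connected n V c.
Proof.
  intros Hpath.
  assert (Hfrom0 : forall i, (i < n)%nat -> vreach n V c 0 i /\ vreach n V c i 0).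
  { induction i as [|i IH]; intros Hi; [split; apply vreach_refl|].
    destruct (IH ltac:(lia)) as [H0i Hi0]. split.
    - eapply vreach_step; [exact H0i | exact Hi | apply Hpath, Hi].
    - apply (vreach_trans _ _ _ _ i); [|exact Hi0].
      eapply vreach_step; [apply vreach_refl | lia | rewrite dist_comm; apply Hpath, Hi]. }
  intros i j Hi Hj. apply (vreach_trans _ _ _ _ 0); [apply Hfrom0, Hi | apply Hfrom0, Hj].
Qed.

Lemma stretching_exists g (e : execution) (Q : config -> Prop) :
  stretching g -> (exists t, Q (e t)) <-> (exists t, Q (e (g t))).
Proof.
  intros [_ [_ Hsurj]]. split; intros [t Ht].
  - destruct (Hsurj t) as [s <-]. now exists s.
  - now exists (g t).
Qed.

Lemma stretching_forall g (e : execution) (Q : config -> Prop) :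
  stretching g -> (forall t, Q (e t)) <-> (forall t, Q (e (g t))).
Proof.
  intros [_ [_ Hsurj]]. split; intros Hall t; [apply Hall|].
  destruct (Hsurj t) as [s <-]. apply Hall.
Qed.

Lemma stretching_step_back g : stretching g -> forall t, exists s, g s = t /\ g (S s) = S t.
Proof.
  intros [Hg0 [Hstep Hsurj]] t.
  assert (Hback : forall s, (S t <= g s)%nat -> exists s', g s' = t /\ g (S s') = S t).
  { induction s as [|s IH]; intros Hs; [rewrite Hg0 in Hs; lia|].
    destruct (Compare_dec.le_lt_dec (S t) (g s)) as [Hle|Hlt]; [exact (IH Hle)|].
    exists s. destruct (Hstep s); lia. }
  destruct (Hsurj (S t)) as [s Hs]. apply (Hback s). lia.
Qed.

Lemma stretching_always_step g (e : execution) (Rstep : config -> config -> Prop) :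
  (forall c, Rstep c c) -> stretching g ->
  (forall t, Rstep (e t) (e (S t))) <-> (forall t, Rstep (e (g t)) (e (g (S t)))).
Proof.
  intros Hrefl Hg. pose proof Hg as [_ [Hstep _]]. split; intros Hall t.
  - destruct (Hstep t) as [-> | ->]; [apply Hrefl | apply Hall].
  - destruct (stretching_step_back g Hg t) as [s [Hs HSs]].
    specialize (Hall s). rewrite Hs, HSs in Hall. exact Hall.
Qed.

Definition team2 : team := mkTeam 2 1 ltac:(lia) ltac:(lra).

Definition lockstep_step (c c' : config) : Prop :=
  (c 0%nat = c' 0%nat /\ c 1%nat = c' 1%nat) \/ (c 0%nat <> c' 0%nat /\ c 1%nat <> c' 1%nat).

Definition lockstep_motion (e : execution) : Prop :=
  (exists t, e t 0%nat <> e O 0%nat) /\ forall t, lockstep_step (e t) (e (S t)).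

Lemma lockstep_motion_stutter e g :
  stretching g -> lockstep_motion e <-> lockstep_motion (fun t => e (g t)).
Proof.
  intros Hg. pose proof Hg as [Hg0 _]. unfold lockstep_motion. rewrite Hg0.
  rewrite (stretching_exists g e (fun c => c 0%nat <> e O 0%nat) Hg).
  rewrite (stretching_always_step g e lockstep_step) by (auto || now left).
  reflexivity.
Qed.

Definition lockstep_problem : problem := mkProblem lockstep_motion lockstep_motion_stutter.

Lemma lockstep_solvable_FSYNCH v : solvable FSYNCH v team2 lockstep_problem.
Proof.
  exists (fun _ => (1, 0)). intros c0 _ frames act Hact.
  assert (Hmove : forall t i, (i < 2)%nat ->
    exec v team2 (fun _ => (1, 0)) frames act c0 t i <>
    exec v team2 (fun _ => (1, 0)) frames act c0 (S t) i).
  { intros t i Hi. rewrite exec_succ, (Hact t i Hi).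
    intros E. symmetry in E. apply to_global_eq_self in E. injection E; lra. }
  split.
  - exists 1%nat. apply not_eq_sym, Hmove; lia.
  - intros t. right. split; apply Hmove; lia.
Qed.

Definition frame_id : frame := mkFrame 1 0 false (or_introl R1_neq_R0).

Definition unit_pair : config := fun i => match i with O => (0, 0) | _ => (1, 0) end.

Lemma unit_pair_admissible : admissible team2 unit_pair.
Proof.
  split.
  - intros [|[|i]] [|[|j]] Hi Hj E; simpl in *; try lia; injection E; lra.
  - apply path_vis_connected. intros [|i] Hi; simpl in Hi; [|lia].
    apply dist_le_iff; unfold sqdist; simpl; lra.
Qed.

Definition alternate (t i : nat) : bool := Nat.eqb i (if Nat.even t then 0 else 1).

Lemma alternate_valid : valid_schedule SSYNCH 2 alternate.
Proof.
  unfold alternate. split.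
  - intros t. destruct (Nat.even t); [exists 0%nat | exists 1%nat]; auto.
  - intros [|[|i]] Hi t; [| |lia].
    + exists (2 * t)%nat. rewrite Nat.even_mul. split; [lia | reflexivity].
    + exists (S (2 * t)). rewrite Nat.even_succ, <- Nat.negb_even, Nat.even_mul.
      split; [lia | reflexivity].
Qed.

Lemma lockstep_unsolvable_SSYNCH v : ~ solvable SSYNCH v team2 lockstep_problem.
Proof.
  intros [A HA].
  destruct (HA unit_pair unit_pair_admissible (fun _ => frame_id) alternate alternate_valid)
    as [[t Hmoved] Hlockstep].
  apply Hmoved. clear Hmoved.
  set (e := exec v team2 A (fun _ => frame_id) alternate unit_pair).
  induction t as [|t IH]; [reflexivity|]. rewrite <- IH.
  destruct (Hlockstep t) as [[E0 _] | [N0 N1]]; [symmetry; exact E0|].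
  exfalso. destruct (Nat.even t) eqn:Ht; [apply N1 | apply N0];
    symmetry; apply exec_inactive; unfold alternate; now rewrite Ht.
Qed.

Definition team4 : team := mkTeam 4 1 ltac:(lia) ltac:(lra).

Definition line4 (x3 : R) : config := fun i => match i with
  | O => (0, 0) | 1%nat => (1, 0) | 2%nat => (2, 0) | _ => (x3, 0) end.

Definition cfgA : config := line4 3.
Definition cfgB : config := line4 (5 / 2).

Definition agrees_on (n : nat) (c c' : config) : Prop :=
  forall i, (i < n)%nat -> c i = c' i.

Definition escapeA_freezeB (e : execution) : Prop :=
  (agrees_on 4 (e O) cfgA -> exists t, exists i, (i < 4)%nat /\ e t i <> e O i) /\
  (agrees_on 4 (e O) cfgB -> forall t, forall i, (i < 4)%nat -> e t i = e O i).

Lemma escapeA_freezeB_stutter e g :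
  stretching g -> escapeA_freezeB e <-> escapeA_freezeB (fun t => e (g t)).
Proof.
  intros Hg. pose proof Hg as [Hg0 _]. unfold escapeA_freezeB. rewrite Hg0.
  rewrite (stretching_exists g e (fun c => exists i, (i < 4)%nat /\ c i <> e O i) Hg).
  rewrite (stretching_forall g e (fun c => forall i, (i < 4)%nat -> c i = e O i) Hg).
  reflexivity.
Qed.

Definition escapeA_freezeB_problem : problem :=
  mkProblem escapeA_freezeB escapeA_freezeB_stutter.

Definition positions (n : nat) (c : config) : point -> Prop :=
  fun p => exists j, (j < n)%nat /\ p = c j.

Lemma positions_agree n c c' : agrees_on n c c' -> positions n c = positions n c'.
Proof.
  intros Hcc'. apply functional_extensionality; intros p.
  apply propositional_extensionality. unfold positions.
  split; intros [j [Hj ->]]; exists j; rewrite (Hcc' j Hj); auto.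
Qed.

Lemma positions_intro n c j : (j < n)%nat -> positions n c (c j).
Proof. intros Hj. exists j. auto. Qed.

Lemma snapshot_FV_intro Rt c f i j :
  (j < tn Rt)%nat -> snapshot FV Rt c f i (to_local f (c i) (c j)).
Proof. intros Hj. exists j. repeat split; auto. Qed.

Definition has_sqdist_ratio (rho : R) (S : point -> Prop) : Prop :=
  exists p q r s, S p /\ S q /\ S r /\ S s /\
    0 < sqdist r s /\ sqdist p q = rho * sqdist r s.

Lemma has_sqdist_ratio_snapshot_FV rho Rt c f i :
  has_sqdist_ratio rho (snapshot FV Rt c f i) <-> has_sqdist_ratio rho (positions (tn Rt) c).
Proof.
  pose proof (frame_scale_pos f) as Hk.
  split; intros [p [q [r [s [Hp [Hq [Hr [Hs [Hpos Hratio]]]]]]]]].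
  - destruct Hp as [j1 [Hj1 [_ ->]]], Hq as [j2 [Hj2 [_ ->]]],
      Hr as [j3 [Hj3 [_ ->]]], Hs as [j4 [Hj4 [_ ->]]].
    rewrite !sqdist_to_local in Hpos; rewrite !sqdist_to_local in Hratio.
    exists (c j1), (c j2), (c j3), (c j4).
    repeat split; try (apply positions_intro; assumption).
    + apply (Rmult_lt_reg_l (fa f ^ 2 + fb f ^ 2)); [exact Hk | rewrite Rmult_0_r; exact Hpos].
    + apply (Rmult_eq_reg_l (fa f ^ 2 + fb f ^ 2)); [rewrite Hratio; ring | lra].
  - destruct Hp as [j1 [Hj1 ->]], Hq as [j2 [Hj2 ->]],
      Hr as [j3 [Hj3 ->]], Hs as [j4 [Hj4 ->]].
    exists (to_local f (c i) (c j1)), (to_local f (c i) (c j2)),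
      (to_local f (c i) (c j3)), (to_local f (c i) (c j4)).
    rewrite !sqdist_to_local, Hratio.
    repeat split; try (apply snapshot_FV_intro; assumption).
    + apply Rmult_lt_0_compat; assumption.
    + ring.
Qed.

Definition freeze_on_ratio25 (S : point -> Prop) : point :=
  if excluded_middle_informative (has_sqdist_ratio 25 S) then (0, 0) else (1, 0).

Lemma freeze_on_ratio25_stays S : has_sqdist_ratio 25 S -> freeze_on_ratio25 S = (0, 0).
Proof.
  intros Hratio. unfold freeze_on_ratio25.
  destruct (excluded_middle_informative _); [reflexivity | contradiction].
Qed.

Lemma freeze_on_ratio25_moves S : ~ has_sqdist_ratio 25 S -> freeze_on_ratio25 S = (1, 0).
Proof.
  intros Hnot. unfold freeze_on_ratio25.
  destruct (excluded_middle_informative _); [contradiction | reflexivity].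
Qed.

Lemma cfgA_no_ratio25 : ~ has_sqdist_ratio 25 (positions 4 cfgA).
Proof.
  assert (Hrange : forall j k, (j < 4)%nat -> (k < 4)%nat ->
    sqdist (cfgA j) (cfgA k) <= 9 /\
    (0 < sqdist (cfgA j) (cfgA k) -> 1 <= sqdist (cfgA j) (cfgA k))).
  { intros [|[|[|[|j]]]] [|[|[|[|k]]]] Hj Hk; try lia; unfold sqdist; simpl; split; intros; lra. }
  intros [p [q [r [s [[j1 [Hj1 ->]] [[j2 [Hj2 ->]] [[j3 [Hj3 ->]] [[j4 [Hj4 ->]]
    [Hpos Hratio]]]]]]]]].
  destruct (Hrange j1 j2 Hj1 Hj2) as [Hmax _], (Hrange j3 j4 Hj3 Hj4) as [_ Hmin].
  specialize (Hmin Hpos). lra.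
Qed.

Lemma cfgB_ratio25 : has_sqdist_ratio 25 (positions 4 cfgB).
Proof.
  exists (cfgB 0%nat), (cfgB 3%nat), (cfgB 2%nat), (cfgB 3%nat).
  repeat split; try (apply positions_intro; lia); unfold sqdist; simpl; lra.
Qed.

Lemma escapeA_freezeB_solvable_FV s : solvable s FV team4 escapeA_freezeB_problem.
Proof.
  exists freeze_on_ratio25. intros c0 _ frames act Hact. split.
  - intros HA. destruct (valid_schedule_active s 4 act ltac:(lia) Hact O) as [i [Hi Hai]].
    exists 1%nat, i. split; [exact Hi|].
    rewrite exec_succ, Hai, to_global_eq_self, freeze_on_ratio25_moves.
    + intros E; injection E; lra.
    + rewrite has_sqdist_ratio_snapshot_FV. change (tn team4) with 4%nat.
      rewrite (positions_agree 4 _ cfgA HA).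
      exact cfgA_no_ratio25.
  - intros HB t i Hi. apply exec_stationary; [|exact Hi].
    intros j _. apply freeze_on_ratio25_stays.
    rewrite has_sqdist_ratio_snapshot_FV. change (tn team4) with 4%nat.
    rewrite (positions_agree 4 _ cfgB HB).
    exact cfgB_ratio25.
Qed.

Lemma line4_admissible x3 : 2 < x3 <= 3 -> admissible team4 (line4 x3).
Proof.
  intros Hx3. split.
  - intros [|[|[|[|i]]]] [|[|[|[|j]]]] Hi Hj E; simpl in *; try lia; injection E; lra.
  - apply path_vis_connected. intros [|[|[|i]]] Hi; simpl in Hi; try lia;
      apply dist_le_iff; unfold sqdist; simpl; nra.
Qed.

Definition frame_half_turn : frame := mkFrame (-1) 0 false (or_introl (ltac:(lra) : -1 <> 0)).

Definition framesA (i : nat) : frame :=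
  match i with 3%nat => frame_half_turn | _ => frame_id end.

Definition twinB (i : nat) : nat :=
  match i with 1%nat | 2%nat => 1%nat | _ => 0%nat end.

Ltac view_witness j :=
  exists j; split; [simpl; lia | split;
    [apply dist_le_iff; [lra | unfold sqdist; simpl; lra]
    | unfold to_local, flin, psub; simpl; f_equal; lra]].

(* Robots 0 and 3 of cfgA see a single neighbour at distance 1, as robot 0 of
   cfgB does (robot 3 after a half turn); robots 1 and 2 see one neighbour on
   each side at distance 1, as robot 1 of cfgB does. *)
Lemma cfgA_views_cfgB i : (i < 4)%nat ->
  snapshot LV team4 cfgA (framesA i) i = snapshot LV team4 cfgB frame_id (twinB i).
Proof.
  intros Hi. apply functional_extensionality; intros q.
  apply propositional_extensionality. unfold snapshot, sees. change (tV team4) with 1.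
  split; intros [j [Hj [Hs ->]]]; rewrite dist_le_iff in Hs by lra;
    destruct i as [|[|[|[|i]]]]; try lia; destruct j as [|[|[|[|j]]]]; try lia;
    unfold sqdist in Hs; simpl in Hs; try lra;
    first [view_witness 0%nat | view_witness 1%nat | view_witness 2%nat | view_witness 3%nat].
Qed.

Lemma escapeA_freezeB_unsolvable_FSYNCH_LV : ~ solvable FSYNCH LV team4 escapeA_freezeB_problem.
Proof.
  intros [A HA].
  set (all_active := fun _ _ : nat => true).
  assert (Hfsynch : valid_schedule FSYNCH 4 all_active) by (intros ? ? ?; reflexivity).
  assert (HfreezeB : forall i, (i < 4)%nat -> A (snapshot LV team4 cfgB frame_id i) = (0, 0)).
  { intros i Hi.
    destruct (HA cfgB (line4_admissible (5 / 2) ltac:(lra)) (fun _ => frame_id)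
                 all_active Hfsynch) as [_ Hfrozen].
    apply (to_global_eq_self frame_id (cfgB i)).
    exact (Hfrozen (fun j _ => eq_refl) 1%nat i Hi). }
  destruct (HA cfgA (line4_admissible 3 ltac:(lra)) framesA all_active Hfsynch) as [Hescape _].
  destruct (Hescape (fun j _ => eq_refl)) as [t [i [Hi Hmoved]]].
  apply Hmoved, exec_stationary; [|exact Hi].
  intros j Hj. rewrite cfgA_views_cfgB by exact Hj.
  apply HfreezeB. destruct j as [|[|[|[|j]]]]; simpl; lia.
Qed.

Theorem theorem13 : incomparable FSYNCH LV SSYNCH FV.
Proof.
  split.
  - exists team2, lockstep_problem.
    split; [apply lockstep_solvable_FSYNCH | apply lockstep_unsolvable_SSYNCH].
  - exists team4, escapeA_freezeB_problem.
    split; [apply escapeA_freezeB_solvable_FV | apply escapeA_freezeB_unsolvable_FSYNCH_LV].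
Qed.
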